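(* For a word $\tau=(a_0,\ldots,a_{L-1})$ of positive integers define its carry constant $C(\tau)=\sum_{j=0}^{L-1}3^{L-1-j}2^{a_0+\cdots+a_{j-1}}$. Let $\sigma=(k_0,\ldots,k_{\ell-1})$ be a word of positive integers, let $C_\ell=C(\sigma)$, and for $1\le s\le\ell-1$ let $\sigma^{\langle s\rangle}=(k_s,k_{s+1},\ldots,k_{\ell-1},k_0,\ldots,k_{s-1})$ be its cyclic rotation starting at index $s$, with $C^{\langle s\rangle}=C(\sigma^{\langle s\rangle})$. Let $m\ge 1$ and suppose $\delta_s:=v_2\bigl(C^{\langle s\rangle}-C_\ell\bigr)\ge m$. Let $r$ be the largest integer with $0\le r\le\ell$ such that $\sum_{j=0}^{r-1}k_j<m$. Then $k_j=k_{(j+s)\bmod\ell}$ for all $0\le j<r$.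
   Context: $v_2$ is the $2$-adic valuation, with $v_2(0)=+\infty$. Empty sums are $0$. *)

From mathcomp Require Import all_boot all_order all_algebra.
Set Implicit Arguments. Unset Strict Implicit. Unset Printing Implicit Defensive.
Import Order.TTheory GRing.Theory Num.Theory.

Definition carry (tau : seq nat) : nat :=
  \sum_(j < size tau) 3 ^ (size tau - 1 - j) * 2 ^ (\sum_(i < j) nth 0 tau i).

(* "v_2(x) >= m" with the convention v_2(0) = +oo. *)
Definition v2_ge (x : int) (m : nat) : Prop :=
  x = 0%R \/ (m <= logn 2 `|x|%N)%N.

From mathcomp Require Import all_boot all_order all_algebra.
From mathcomp Require Import zify.

(* C(a :: t) = 3^|t| + 2^a C(t), and C(t) is odd for a nonempty word of
   positive letters.  Hence a congruence C(a :: x) = C(b :: y) mod 2^m between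
   words of the same length forces a = b as soon as a < m (after removing 3^|x|
   both sides have 2-adic valuations a and b), and cancelling 2^a leaves
   C(x) = C(y) mod 2^(m-a).  Iterating recovers every letter whose prefix sum
   stays below m, except possibly the last letter of the word, which the carry
   does not see; that one is recovered from the total letter sum, which
   rotation preserves. *)

Lemma carry_cons a t : carry (a :: t) = 3 ^ size t + 2 ^ a * carry t.
Proof.
rewrite /carry /= big_ord_recl /= big_ord0 subn0 subn1 /= muln1; congr (_ + _).
rewrite big_distrr /=; apply: eq_bigr => i _.
rewrite /bump /= add1n subn1 /= big_ord_recl /= expnD.
have -> : (size t).-1 - i = size t - i.+1 by lia.
by rewrite mulnCA.
Qed.

Lemma odd_carry t : all (fun k => 0 < k) t -> t != [::] -> odd (carry t).
Proof.
case: t => [|a t] //= /andP[a_gt0 _] _.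
by rewrite carry_cons oddD oddX oddM oddX orbT (gtn_eqF a_gt0).
Qed.

Lemma eqn_modMexpl d a m x y : 0 < d -> a <= m ->
  (d ^ a * x == d ^ a * y %[mod d ^ m]) = (x == y %[mod d ^ (m - a)]).
Proof.
move=> d_gt0 am; rewrite -(subnKC am) addKn expnD -!muln_modr.
by rewrite eqn_pmul2l ?expn_gt0 ?d_gt0.
Qed.

Lemma odd_eqmod_exp2 x y k : 0 < k -> x = y %[mod 2 ^ k] -> odd x = odd y.
Proof.
move=> k_gt0; have two_dvd : 2 %| 2 ^ k by rewrite -{1}(expn1 2) dvdn_exp2l.
move=> /(congr1 (modn^~ 2)); rewrite /= !modn_dvdm // !modn2.
by move=> /(congr1 odd); rewrite !oddb.
Qed.

Lemma exp2_odd_eqmod_inj a b x y m : odd x -> odd y -> a < m ->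
  2 ^ a * x = 2 ^ b * y %[mod 2 ^ m] -> a = b.
Proof.
(* Cancel 2^(min a b) and compare parities. *)
move=> odd_x odd_y a_lt_m; set c := minn a b.
have c_le_a : c <= a by exact: geq_minl.
have c_le_b : c <= b by exact: geq_minr.
rewrite -(subnKC c_le_a) -[in 2 ^ b](subnKC c_le_b) !expnD -!mulnA => /eqP.
rewrite eqn_modMexpl //; last by lia.
move=> /eqP /odd_eqmod_exp2; rewrite !oddM !oddX odd_x odd_y !andbT !orbF.
have c_lt_m : 0 < m - c by lia.
move=> /(_ c_lt_m); rewrite subnKC // !subn_eq0 !leq_min !leqnn andbT /=.
by case: ltngtP.
Qed.

Lemma carry_eqmod_nth x y m j :
  size x = size y -> all (fun k => 0 < k) x -> all (fun k => 0 < k) y ->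
  sumn x = sumn y -> carry x = carry y %[mod 2 ^ m] ->
  sumn (take j.+1 x) < m -> nth 0 x j = nth 0 y j.
Proof.
elim: x y m j => [|a x IH] [|b y] m j //= [size_xy].
move=> /andP[_ pos_x] /andP[_ pos_y] sum_xy.
rewrite !carry_cons size_xy => /eqP; rewrite eqn_modDl => /eqP carry_xy sum_lt.
have a_lt_m : a < m by lia.
have a_eq_b : a = b.
  have [x_nil | x_nnil] := eqVneq x [::].
    by move: size_xy sum_xy; rewrite x_nil => /esym/size0nil -> /=; lia.
  have y_nnil : y != [::] by rewrite -size_eq0 -size_xy size_eq0.
  exact: exp2_odd_eqmod_inj (odd_carry _ pos_x x_nnil) (odd_carry _ pos_y y_nnil)
    a_lt_m carry_xy.
subst b; case: j sum_lt => [|j] //= sum_lt.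
apply: (IH y (m - a)) => //; first by lia.
  by apply/eqP; rewrite -eqn_modMexpl ?carry_xy //; lia.
by lia.
Qed.

Lemma nth_rot T (x0 : T) (s : seq T) n i : n <= size s -> i < size s ->
  nth x0 (rot n s) i = nth x0 s ((i + n) %% size s).
Proof.
move=> n_le i_lt; rewrite /rot nth_cat size_drop; case: ltnP => i_n.
  by rewrite nth_drop modn_small 1?addnC //; lia.
rewrite nth_take; last by lia.
have -> : i + n = (i - (size s - n)) + size s by lia.
by rewrite modnDr modn_small //; lia.
Qed.

Lemma sum_nth_take (s : seq nat) r : \sum_(j < r) nth 0 s j = sumn (take r s).
Proof.
elim: s r => [|a s IH] [|r] /=; rewrite ?big_ord0 //.
  by rewrite big1 // => i _; rewrite nth_nil.
by rewrite big_ord_recl /= IH.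
Qed.

Lemma leq_sumn_take (s : seq nat) i j : i <= j -> sumn (take i s) <= sumn (take j s).
Proof. by move=> ij; rewrite -(subnKC ij) takeD sumn_cat leq_addr. Qed.

Lemma v2_ge_eqmod (x y m : nat) : v2_ge (x%:Z - y%:Z)%R m -> x = y %[mod 2 ^ m].
Proof.
move=> v2_m; apply/eqP; rewrite -eqz_nat -!modz_nat eqz_mod_dvd dvdzE absz_nat.
have [-> // | d_neq0] := eqVneq `|(x%:Z - y%:Z)%R|%N 0.
case: v2_m => [xy0 | m_le]; first by rewrite xy0 in d_neq0.
by rewrite pfactor_dvdn // lt0n.
Qed.

Theorem mainTheorem19 (sigma : seq nat) (s m r : nat) :
  all (fun k => 0 < k) sigma ->
  1 <= s <= size sigma - 1 ->
  1 <= m ->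
  v2_ge ((carry (rot s sigma))%:Z - (carry sigma)%:Z)%R m ->
  r <= size sigma ->
  \sum_(j < r) nth 0 sigma j < m ->
  (forall r', r' <= size sigma -> \sum_(j < r') nth 0 sigma j < m -> r' <= r) ->
  forall j, j < r -> nth 0 sigma j = nth 0 sigma ((j + s) %% size sigma).
Proof.
move=> pos_sigma /andP[_ s_le] _ v2_m r_le sum_lt _ j j_lt_r.
rewrite -nth_rot; [|lia|lia].
apply: (carry_eqmod_nth _ _ m).
- by rewrite size_rot.
- exact: pos_sigma.
- by rewrite /rot all_cat andbC -all_cat cat_take_drop.
- by rewrite sumn_rot.
- exact/esym/v2_ge_eqmod.
- by apply: leq_ltn_trans sum_lt; rewrite sum_nth_take leq_sumn_take.
Qed.
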